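(* Let $\alpha\in\mathbb{N}$ and let $Q_n(f)=\sum_{j=1}^n w_j f(\xi_j)$ be a quadrature rule with distinct points $\xi_1<\dots<\xi_n$ in $\mathbb{R}$ and arbitrary weights $w_j\in\mathbb{R}$. Let $\delta=\delta(n)\in(0,1]$ be such that no quadrature point $\xi_j$ lies in $(0,\delta)$. Then \[ e^{\mathrm{wor}}(Q_n,\mathscr{H}_\alpha)\geq C_\alpha\delta^{\alpha+1/2}, \] where $C_\alpha>0$ is independent of $\delta$. In particular, if $Q_n$ has no quadrature point in $(0,n^{-r})$ for some $r>0$, then $e^{\mathrm{wor}}(Q_n,\mathscr{H}_\alpha)\geq C_\alpha n^{-r\alpha-r/2}$.
   Context: Let $\rho(x)=\frac{1}{\sqrt{2\pi}}\mathrm{e}^{-x^2/2}$ and $L^2_\rho$ the space of (equivalence classes of) measurable $f:\mathbb{R}\to\mathbb{R}$ with $\|f\|_{L^2_\rho}^2=\int_\mathbb{R}|f(x)|^2\rho(x)\,\mathrm{d}x<\infty$. For $\alpha\in\mathbb{N}$, the weighted Sobolev space $\mathscr{H}_\alpha$ is the set of $f\in L^2_\rho$ having weak derivatives $f^{(\tau)}\in L^2_\rho$ for $\tau=1,\dots,\alpha$, with norm $\|f\|_\alpha=(\sum_{\tau=0}^\alpha\|f^{(\tau)}\|_{L^2_\rho}^2)^{1/2}$; elements are identified with their continuous representatives. Let $I(f)=\int_\mathbb{R}f(x)\rho(x)\,\mathrm{d}x$. For a quadrature rule $Q_n$, the worst-case error is $e^{\mathrm{wor}}(Q_n,\mathscr{H}_\alpha)=\sup_{0\neq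 f\in\mathscr{H}_\alpha}|I(f)-Q_n(f)|/\|f\|_\alpha$. *)

From HB Require Import structures.
From mathcomp Require Import all_boot all_order all_algebra.
From mathcomp Require Import all_classical all_reals all_analysis.
Set Implicit Arguments. Unset Strict Implicit. Unset Printing Implicit Defensive.
Import Order.TTheory GRing.Theory Num.Theory.
Import numFieldNormedType.Exports.
Local Open Scope classical_set_scope.
Local Open Scope ring_scope.

Section Defs.
Variable R : realType.
Notation leb := (@lebesgue_measure R).

Definition rho (x : R) : R := expR (- (x ^+ 2) / 2) / Num.sqrt (2 * pi).

Definition inL2rho (f : R -> R) : Prop :=
  measurable_fun setT f /\
  (\int[leb]_x (((f x) ^+ 2 * rho x)%:E) < +oo)%E.

Definition sqnormL2rho (f : R -> R) : R :=
  Rintegral leb setT (fun x => (f x) ^+ 2 * rho x).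

Definition test_fun (phi : R -> R) : Prop :=
  (forall (k : nat) (x : R), derivable (derive1n k phi) x 1) /\
  (exists M : R, forall x, M < `|x| -> phi x = 0).

Definition weak_deriv (h g : R -> R) : Prop :=
  forall phi, test_fun phi ->
    Rintegral leb setT (fun x => h x * derive1 phi x) =
    - Rintegral leb setT (fun x => g x * phi x).

(* f (continuous representative) belongs to H_alpha, with g tau = f^(tau),
   g 0 = f, each g tau in L^2_rho, g (tau+1) weak derivative of g tau *)
Definition in_H (alpha : nat) (f : R -> R) (g : nat -> R -> R) : Prop :=
  continuous f /\ g 0%N = f /\
  (forall tau, (tau <= alpha)%N -> inL2rho (g tau)) /\
  (forall tau, (tau < alpha)%N -> weak_deriv (g tau) (g tau.+1)).

Definition H_norm (alpha : nat) (g : nat -> R -> R) : R :=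
  Num.sqrt (\sum_(0 <= tau < alpha.+1) sqnormL2rho (g tau)).

Definition Igauss (f : R -> R) : R := Rintegral leb setT (fun x => f x * rho x).

Definition quad (n : nat) (w xi : 'I_n -> R) (f : R -> R) : R :=
  \sum_(j < n) w j * f (xi j).

Definition ewor (alpha n : nat) (w xi : 'I_n -> R) : \bar R :=
  ereal_sup [set e : \bar R | exists (f : R -> R) (g : nat -> R -> R),
     [/\ in_H alpha f g, f <> (fun _ => 0) &
          e = ((`|Igauss f - quad w xi f| / H_norm alpha g)%:E)]].
End Defs.

From HB Require Import structures.
From mathcomp Require Import all_boot all_order all_algebra.
From mathcomp Require Import all_classical all_reals all_analysis.
From mathcomp Require Import measurable_realfun ring lra.
Import Order.TTheory GRing.Theory Num.Theory.
Import numFieldNormedType.Exports.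
Set Implicit Arguments. Unset Strict Implicit. Unset Printing Implicit Defensive.
Local Open Scope classical_set_scope.
Local Open Scope ring_scope.

(* Take the bump f(x) = B(x/δ), B(y) = (y(1-y))^(α+1), extended by zero
   outside [0, δ].  For τ ≤ α its derivatives δ^-τ B^(τ)(x/δ) vanish at 0 and
   at δ, so their zero extensions are continuous and are the weak derivatives:
   f ∈ H_α.  No node of Q_n lies in (0, δ), hence Q_n(f) = 0, whereas
   I(f) ≥ c δ because f ≥ (3/16)^(α+1) and ρ ≥ ρ(1) on [δ/4, 3δ/4].  Since the
   support has length δ, ‖f^(τ)‖² ≤ K² ρ(0) δ^(1-2τ) ≤ K² ρ(0) δ^(1-2α), so
   |I(f) - Q_n(f)| / ‖f‖_α ≥ c' δ^(α+1/2). *)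

Section MultipleRoot.
Variable F : fieldType.
Implicit Types (p : {poly F}) (c : F).

Lemma dvdp_XsubC_exp_deriv p c n :
  ('X - c%:P) ^+ n.+1 %| p -> ('X - c%:P) ^+ n %| p^`().
Proof.
case/dvdpP=> q ->; rewrite derivM deriv_exp derivXsubC mul1r /= mulrnAr -mulr_natr.
apply: dvdp_add; first exact/dvdp_mull/dvdp_exp2l.
exact/dvdp_mulr/dvdp_mull.
Qed.

Lemma root_derivn_XsubC_exp p c k s :
  (s < k)%N -> ('X - c%:P) ^+ k %| p -> root p^`(s) c.
Proof.
move=> lt_sk dvd_p; suff: ('X - c%:P) ^+ (k - s) %| p^`(s).
  rewrite -dvdp_XsubCl; apply: dvdp_trans.
  by rewrite -[X in X %| _]expr1 dvdp_exp2l // subn_gt0.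
elim: s lt_sk => [|s IHs] lt_sk; first by rewrite subn0.
have lt_s_k := ltnW lt_sk.
by rewrite derivnS; apply: dvdp_XsubC_exp_deriv; rewrite subnSK // IHs.
Qed.

End MultipleRoot.

Section Rescaling.
Variable R : comNzRingType.
Implicit Types (p : {poly R}) (a x : R).

Lemma derivn_comp_scale p a n :
  (p \Po (a *: 'X))^`(n) = a ^+ n *: (p^`(n) \Po (a *: 'X)).
Proof.
elim: n => [|n IHn]; first by rewrite expr0 scale1r.
rewrite derivnS IHn derivZ deriv_comp derivZ derivX alg_polyC -derivnS.
by rewrite mulrC mul_polyC scalerA exprSr.
Qed.

Lemma horner_derivn_comp_scale p a n x :
  ((p \Po (a *: 'X))^`(n)).[x] = a ^+ n * (p^`(n)).[a * x].
Proof. by rewrite derivn_comp_scale hornerZ horner_comp hornerZ hornerX. Qed.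

End Rescaling.

Section BumpPolynomial.
Variable F : fieldType.

Definition bump_poly (m : nat) : {poly F} := ('X * (1 - 'X)) ^+ m.

Lemma horner_bump_poly m y : (bump_poly m).[y] = (y * (1 - y)) ^+ m.
Proof. by rewrite /bump_poly horner_exp !hornerE. Qed.

Lemma dvdp_bump_poly m c : c = 0 \/ c = 1 -> ('X - c%:P) ^+ m %| bump_poly m.
Proof.
rewrite /bump_poly exprMn; case=> ->; first by rewrite subr0 dvdp_mulr.
have -> : 1 - 'X = - ('X - 1%:P) :> {poly F} by rewrite opprB polyC1.
by rewrite exprNn mulrA dvdp_mull.
Qed.

Lemma root_derivn_bump_poly m s c : (s < m)%N -> c = 0 \/ c = 1 ->
  root (bump_poly m)^`(s) c.
Proof. by move=> lt_sm /(dvdp_bump_poly m); apply: root_derivn_XsubC_exp. Qed.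

End BumpPolynomial.

Section CoefBound.
Variable R : numDomainType.

Lemma norm_horner_le_sum_coef (p : {poly R}) y : `|y| <= 1 ->
  `|p.[y]| <= \sum_(i < size p) `|p`_i|.
Proof.
move=> y1; rewrite horner_coef; apply: le_trans (ler_norm_sum _ _ _) _.
apply: ler_sum => i _; rewrite normrM -[leRHS]mulr1 ler_wpM2l //.
by rewrite normrX exprn_ile1.
Qed.

Lemma derivn_bounded_on_unit_ball (p : {poly R}) n : exists2 K, 0 < K &
  forall s y, (s <= n)%N -> `|y| <= 1 -> `|(p^`(s)).[y]| <= K.
Proof.
pose K := 1 + \sum_(s < n.+1) \sum_(i < size p^`(s)) `|p^`(s)`_i|.
exists K => [|s y le_sn y1].
  by rewrite ltr_wpDr //; apply: sumr_ge0 => *; apply: sumr_ge0.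
apply: le_trans (norm_horner_le_sum_coef _ y1) _.
rewrite /K (bigD1 (Ordinal (le_sn : (s < n.+1)%N))) //= addrCA.
by rewrite lerDl addr_ge0 //; apply: sumr_ge0 => *; apply: sumr_ge0.
Qed.

End CoefBound.

Section Clamp.
Variable R : realType.
Implicit Types (a b x : R).

Definition clamp a b x : R := Num.min (Num.max x a) b.

Lemma clamp_id a b x : a <= x <= b -> clamp a b x = x.
Proof. by case/andP=> ax xb; rewrite /clamp max_l ?min_l. Qed.

Lemma clamp_mem a b x : a <= b -> a <= clamp a b x <= b.
Proof. by move=> ab; rewrite /clamp le_min le_max ab ge_min !lexx !orbT. Qed.

Lemma clamp_out a b x : a <= b -> ~ (a < x < b) ->
  clamp a b x = a \/ clamp a b x = b.
Proof.
move=> ab xab; rewrite /clamp; have [ax|xa] := ltP a x; last by left; apply: min_l.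
right; apply: min_r; rewrite leNgt; apply/negP => xb.
by apply: xab; rewrite ax.
Qed.

Lemma continuous_clamp a b : continuous (clamp a b).
Proof.
apply: min_fun_continuous; last exact: cst_continuous.
by apply: max_fun_continuous; [move=> x; exact: cvg_id | exact: cst_continuous].
Qed.

Lemma horner_clamp_out (p : {poly R}) a b x : a <= b -> p.[a] = 0 -> p.[b] = 0 ->
  ~ (a < x < b) -> p.[clamp a b x] = 0.
Proof. by move=> ab pa pb /(clamp_out ab) [] ->. Qed.

Lemma continuous_horner_clamp (p : {poly R}) a b :
  continuous (fun x => p.[clamp a b x]).
Proof.
move=> x; apply: continuous_comp; first exact: continuous_clamp.
exact: continuous_horner.
Qed.

End Clamp.

Section GaussianDensity.
Variable R : realType.

Lemma rho_gt0 (x : R) : 0 < rho x.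
Proof. by rewrite divr_gt0 ?expR_gt0 // sqrtr_gt0 mulr_gt0 // pi_gt0. Qed.

Lemma rho_le_rho0 (x : R) : rho x <= rho 0.
Proof.
rewrite ler_pM2r ?invr_gt0 ?sqrtr_gt0 ?mulr_gt0 ?pi_gt0 // ler_expR.
by rewrite expr0n /= oppr0 mul0r mulNr oppr_le0 mulr_ge0 ?sqr_ge0.
Qed.

Lemma rho1_le_rho (x : R) : `|x| <= 1 -> rho 1 <= rho x.
Proof.
move=> x1; rewrite ler_pM2r ?invr_gt0 ?sqrtr_gt0 ?mulr_gt0 ?pi_gt0 // ler_expR.
rewrite expr1n !mulNr lerN2 ler_wpM2r ?invr_ge0 //.
by rewrite -real_normK ?num_real // exprn_ile1.
Qed.

Lemma continuous_rho : continuous (@rho R).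
Proof.
move=> x; apply: cvgM; last exact: cvg_cst.
apply: continuous_comp; last exact: continuous_expR.
by apply: cvgM; [apply: cvgN; exact: exprn_continuous | exact: cvg_cst].
Qed.

End GaussianDensity.

Section CompactSupport.
Variable R : realType.
Notation mu := (@lebesgue_measure R).
Implicit Types (h : R -> R) (a b : R).

Lemma continuous_sqr_fun (f : R -> R) : continuous f -> continuous (fun x => f x ^+ 2).
Proof.
move=> cf x; apply: (@continuous_comp _ _ _ f (fun y => y ^+ 2)); first exact: cf.
exact: exprn_continuous.
Qed.

Lemma integrable_itv_continuous h a b : continuous h ->
  mu.-integrable `[a, b] (EFin \o h).
Proof.
move=> ch; apply: continuous_compact_integrable; first exact: segment_compact.
exact: continuous_subspaceT.
Qed.

Lemma patch_supported h a b : (forall x, ~ (a < x < b) -> h x = 0) ->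
  h \_ `[a, b] = h.
Proof.
move=> h0; apply/funext => x; rewrite patchE; case: ifPn => // /negP xab.
rewrite h0 // => /andP[ax xb]; apply: xab.
by rewrite inE /= in_itv /= !ltW.
Qed.

Lemma integrable_supported h a b : continuous h ->
  (forall x, ~ (a < x < b) -> h x = 0) -> mu.-integrable setT (EFin \o h).
Proof.
move=> ch h0.
have := (integrable_restrict mu (measurable_itv `[a, b]) measurableT (EFin \o h)).1.
rewrite setTI => /(_ (integrable_itv_continuous a b ch)).
by apply: eq_integrable => // x _; rewrite restrict_EFin /= patch_supported.
Qed.

Lemma Rintegral_supported h a b : (forall x, ~ (a < x < b) -> h x = 0) ->
  Rintegral mu setT h = Rintegral mu `[a, b] h.
Proof. by move=> h0; rewrite [RHS]Rintegral_mkcond patch_supported. Qed.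

Lemma Rintegral_itv_le h a b M : a <= b -> continuous h ->
  (forall x, a <= x <= b -> h x <= M) -> Rintegral mu `[a, b] h <= M * (b - a).
Proof.
move=> ab ch hM; have mab : mu `[a, b] = (b - a)%:E.
  by rewrite lebesgue_measure_itv /= lte_fin; case: ltgtP ab => // <-; rewrite subrr.
rewrite -[b - a]/(fine (b - a)%:E) -mab -Rintegral_cst //.
apply: le_Rintegral => //; first exact: integrable_itv_continuous.
exact: (integrable_itv_continuous a b (@cst_continuous _ _ M)).
Qed.

Lemma Rintegral_itv_ge h a b a' b' c : continuous h -> 0 <= c ->
  a <= a' -> a' <= b' -> b' <= b ->
  (forall x, a <= x <= b -> 0 <= h x) -> (forall x, a' <= x <= b' -> c <= h x) ->
  c * (b' - a') <= Rintegral mu `[a, b] h.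
Proof.
move=> ch c0 aa' a'b' b'b h0 hc.
have mh : measurable_fun setT (EFin \o h).
  by apply/measurable_EFinP; exact: continuous_measurable_fun.
have mab' : mu `[a', b'] = (b' - a')%:E.
  by rewrite lebesgue_measure_itv /= lte_fin; case: ltgtP a'b' => // <-; rewrite subrr.
rewrite /Rintegral -lee_fin fineK; last exact/integrable_fin_num/integrable_itv_continuous.
apply: (@le_trans _ _ (\int[mu]_(x in `[a', b']) (h x)%:E)%E).
  rewrite EFinM -mab' -integral_cst //; apply: ge0_le_integral => //.
  exact: measurable_funTS mh.
apply: ge0_subset_integral => //; first exact: measurable_funTS mh.
move=> x; rewrite /= !in_itv /= => /andP[a'x xb'].
by rewrite (le_trans aa' a'x) (le_trans xb' b'b).
Qed.

Lemma inL2rho_supported (f : R -> R) a b : continuous f ->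
  (forall x, ~ (a < x < b) -> f x = 0) -> inL2rho f.
Proof.
move=> cf f0; split; first exact: continuous_measurable_fun.
have cf2 : continuous (fun x => f x ^+ 2 * rho x).
  by move=> x; apply: cvgM; [exact: continuous_sqr_fun | exact: continuous_rho].
have /integrableP[_] : mu.-integrable setT (EFin \o (fun x => f x ^+ 2 * rho x)).
  by apply: (integrable_supported cf2) => x /f0 ->; rewrite expr0n mul0r.
apply: le_lt_trans; apply: le_trans (le_abse_integral _ _ _) => //; first exact: lee_abs.
by apply/measurable_EFinP; exact: continuous_measurable_fun.
Qed.

Lemma sqnormL2rho_ge0 (f : R -> R) : 0 <= sqnormL2rho f.
Proof. by apply: Rintegral_ge0 => x _; rewrite mulr_ge0 ?sqr_ge0 // ltW // rho_gt0. Qed.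

End CompactSupport.

Section WeakDerivative.
Variable R : realType.
Notation mu := (@lebesgue_measure R).

Lemma derivable_continuous (f : R -> R) : (forall x, derivable f x 1) -> continuous f.
Proof. by move=> df x; apply/differentiable_continuous/derivable1_diffP. Qed.

Lemma derivable_oo_LRcontinuousT (f : R -> R) a b :
  (forall x, derivable f x 1) -> derivable_oo_LRcontinuous f a b.
Proof.
move=> df; have cf := derivable_continuous df.
split; [by move=> x _; exact: df | exact: cvg_at_right_filter (cf a) |].
exact: cvg_at_left_filter (cf b).
Qed.

Lemma test_fun_derivable (phi : R -> R) : test_fun phi ->
  (forall x, derivable phi x 1) /\ (forall x, derivable (derive1 phi) x 1).
Proof.
case=> dphi _; split=> x; first by have := dphi 0%N x; rewrite derive1n0.
by have := dphi 1%N x; rewrite derive1n1.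
Qed.

Lemma weak_deriv_horner_clamp (p : {poly R}) a b : a < b ->
  p.[a] = 0 -> p.[b] = 0 -> p^`().[a] = 0 -> p^`().[b] = 0 ->
  weak_deriv (fun x => p.[clamp a b x]) (fun x => p^`().[clamp a b x]).
Proof.
move=> ab pa pb p'a p'b phi /test_fun_derivable[dphi dphi'].
have vanish (q : {poly R}) (g : R -> R) : q.[a] = 0 -> q.[b] = 0 ->
    forall x, ~ (a < x < b) -> q.[clamp a b x] * g x = 0.
  by move=> qa qb x /(horner_clamp_out (ltW ab) qa qb) ->; rewrite mul0r.
rewrite (Rintegral_supported (vanish _ _ pa pb)) (Rintegral_supported (vanish _ _ p'a p'b)).
have unclamp (q : {poly R}) g : Rintegral mu `[a, b] (fun x => q.[clamp a b x] * g x) =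
    Rintegral mu `[a, b] (fun x => q.[x] * g x).
  by apply: eq_Rintegral => x; rewrite inE /= in_itv /= => /clamp_id ->.
rewrite !unclamp (Rintegration_by_parts (F := horner p) (G := phi) (f := horner p^`()) ab).
- by rewrite pa pb !mul0r subrr sub0r.
- exact/continuous_subspaceT/continuous_horner.
- by apply: derivable_oo_LRcontinuousT => x; exact: derivable_horner.
- by move=> x _; rewrite derivE.
- exact/continuous_subspaceT/derivable_continuous.
- exact: derivable_oo_LRcontinuousT.
- by [].
Qed.

End WeakDerivative.

Section BumpFamily.
Variables (R : realType) (alpha : nat) (d : R).
Hypotheses (d_gt0 : 0 < d) (d_le1 : d <= 1).

Definition scaled_bump : {poly R} := bump_poly R alpha.+1 \Po (d^-1 *: 'X).

(* Clamping the argument to [0, d] realizes the zero extension of the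
   derivatives of [scaled_bump] of order at most alpha, which vanish at 0 and d. *)
Definition bump_deriv (t : nat) (x : R) : R := (scaled_bump^`(t)).[clamp 0 d x].

Lemma horner_scaled_bump_derivn t x :
  (scaled_bump^`(t)).[x] = d^-1 ^+ t * ((bump_poly R alpha.+1)^`(t)).[d^-1 * x].
Proof. exact: horner_derivn_comp_scale. Qed.

Lemma scaled_bump_derivn_root t c : (t <= alpha)%N -> c = 0 \/ c = d ->
  (scaled_bump^`(t)).[c] = 0.
Proof.
move=> le_ta c0d; rewrite horner_scaled_bump_derivn.
suff /rootP -> : root (bump_poly R alpha.+1)^`(t) (d^-1 * c) by rewrite mulr0.
apply: root_derivn_bump_poly; first by rewrite ltnS.
by case: c0d => ->; [left; rewrite mulr0 | right; rewrite mulVf ?gt_eqF].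
Qed.

Lemma bump_deriv_out t x : (t <= alpha)%N -> ~ (0 < x < d) -> bump_deriv t x = 0.
Proof.
move=> le_ta; apply: horner_clamp_out; first exact: ltW.
  by apply: scaled_bump_derivn_root => //; left.
by apply: scaled_bump_derivn_root => //; right.
Qed.

Lemma continuous_bump_deriv t : continuous (bump_deriv t).
Proof. exact: continuous_horner_clamp. Qed.

Lemma bump_deriv_in_H : in_H alpha (bump_deriv 0) bump_deriv.
Proof.
split; first exact: continuous_bump_deriv.
split=> //; split=> t le_ta.
  apply: (inL2rho_supported (a := 0) (b := d)); first exact: continuous_bump_deriv.
  by move=> x; apply: bump_deriv_out.
have le_t_alpha := ltnW le_ta.
rewrite /bump_deriv derivnS; apply: weak_deriv_horner_clamp => //; rewrite -?derivnS;
  apply: scaled_bump_derivn_root => //; by [left | right].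
Qed.

Lemma quad_bump_deriv0 n (w xi : 'I_n -> R) : (forall j, ~ (0 < xi j < d)) ->
  quad w xi (bump_deriv 0) = 0.
Proof. by move=> xi_out; rewrite /quad big1 // => j _; rewrite bump_deriv_out ?mulr0. Qed.

Lemma scaled_clamp_mem x : 0 <= d^-1 * clamp 0 d x <= 1.
Proof.
have d_ge0 := ltW d_gt0; have /andP[c0 cd] := clamp_mem x d_ge0.
by rewrite mulr_ge0 ?invr_ge0 //= mulrC ler_pdivrMr // mul1r.
Qed.

Lemma bump_deriv0E x :
  bump_deriv 0 x = (d^-1 * clamp 0 d x * (1 - d^-1 * clamp 0 d x)) ^+ alpha.+1.
Proof. by rewrite /bump_deriv horner_scaled_bump_derivn expr0 mul1r derivn0 horner_bump_poly. Qed.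

Lemma bump_deriv0_ge0 x : 0 <= bump_deriv 0 x.
Proof.
have /andP[y0 y1] := scaled_clamp_mem x.
by rewrite bump_deriv0E exprn_ge0 // mulr_ge0 // subr_ge0.
Qed.

Lemma bump_deriv0_ge x : d / 4 <= x <= 3 * d / 4 -> (3 / 16) ^+ alpha.+1 <= bump_deriv 0 x.
Proof.
move=> /andP[x_ge x_le]; rewrite bump_deriv0E clamp_id; last by apply/andP; split; lra.
have y_ge : 1 / 4 <= d^-1 * x by rewrite [d^-1 * x]mulrC ler_pdivlMr //; lra.
have y_le : d^-1 * x <= 3 / 4 by rewrite [d^-1 * x]mulrC ler_pdivrMr //; lra.
by apply: lerXn2r; rewrite ?nnegrE; nra.
Qed.

Lemma bump_deriv0_neq0 : bump_deriv 0 <> (fun _ => 0).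
Proof.
move=> /(congr1 (fun f => f (d / 2))); apply/eqP; rewrite gt_eqF //.
apply: lt_le_trans (bump_deriv0_ge _); first by rewrite exprn_gt0.
by have d0 := d_gt0; apply/andP; split; lra.
Qed.

Lemma Rintegral_mul_rho_ge (f : R -> R) c : continuous f -> 0 <= c ->
  (forall x, 0 <= f x) -> (forall x, ~ (0 < x < d) -> f x = 0) ->
  (forall x, d / 4 <= x <= 3 * d / 4 -> c <= f x) ->
  c * rho 1 * (d / 2) <= Rintegral (@lebesgue_measure R) setT (fun x => f x * rho x).
Proof.
move=> cf c0 f0 f_out f_ge.
rewrite (Rintegral_supported (a := 0) (b := d)); last by move=> x /f_out ->; rewrite mul0r.
have -> : d / 2 = 3 * d / 4 - d / 4 by field.
have rho_ge0 (y : R) : 0 <= rho y by exact: ltW (rho_gt0 y).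
have [d4_ge0 d4_le d34_le] : [/\ 0 <= d / 4, d / 4 <= 3 * d / 4 & 3 * d / 4 <= d].
  by have d0 := d_gt0; split; lra.
apply: Rintegral_itv_ge d4_ge0 d4_le d34_le _ _.
- by move=> x; apply: cvgM; [exact: cf | exact: continuous_rho].
- exact: mulr_ge0.
- by move=> x _; exact: mulr_ge0.
move=> x x_mid; apply: ler_pM; rewrite ?f_ge //.
have [d0 d1] := (d_gt0, d_le1); case/andP: x_mid => x_ge x_le.
by apply: rho1_le_rho; rewrite ger0_norm; lra.
Qed.

Lemma Igauss_bump_deriv0_ge :
  (3 / 16) ^+ alpha.+1 * rho 1 * (d / 2) <= Igauss (bump_deriv 0).
Proof.
apply: Rintegral_mul_rho_ge => [||x|x /(bump_deriv_out (leq0n _)) //|x /bump_deriv0_ge //].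
- exact: continuous_bump_deriv.
- by rewrite exprn_ge0.
- exact: bump_deriv0_ge0.
Qed.

Lemma sqnorm_bump_deriv0_ge :
  ((3 / 16) ^+ alpha.+1) ^+ 2 * rho 1 * (d / 2) <= sqnormL2rho (bump_deriv 0).
Proof.
apply: Rintegral_mul_rho_ge => [||x|x /(bump_deriv_out (leq0n _)) ->|x /bump_deriv0_ge c_le].
- exact/continuous_sqr_fun/continuous_bump_deriv.
- by rewrite exprn_ge0.
- exact: sqr_ge0.
- by rewrite expr0n.
- by apply: lerXn2r; rewrite ?nnegrE ?exprn_ge0 ?bump_deriv0_ge0.
Qed.

Lemma sum_sqnorm_bump_deriv_gt0 :
  0 < \sum_(0 <= t < alpha.+1) sqnormL2rho (bump_deriv t).
Proof.
rewrite big_ltn // ltr_pwDl ?sumr_ge0 // => [|t _]; last exact: sqnormL2rho_ge0.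
apply: lt_le_trans sqnorm_bump_deriv0_ge.
apply: mulr_gt0; last exact: divr_gt0.
by rewrite mulr_gt0 ?rho_gt0 // !exprn_gt0.
Qed.

Variable K : R.
Hypothesis bump_poly_derivn_le : forall t y, (t <= alpha)%N -> `|y| <= 1 ->
  `|((bump_poly R alpha.+1)^`(t)).[y]| <= K.

Lemma norm_bump_deriv_le t x : (t <= alpha)%N -> `|bump_deriv t x| <= d^-1 ^+ alpha * K.
Proof.
move=> le_ta; have /andP[y0 y1] := scaled_clamp_mem x.
have K0 : 0 <= K.
  by apply: le_trans (normr_ge0 _) (bump_poly_derivn_le (y := 0) le_ta _); rewrite normr0.
have dV_ge0 : 0 <= d^-1 by rewrite invr_ge0 ltW.
rewrite /bump_deriv horner_scaled_bump_derivn normrM normrX ger0_norm //.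
apply: ler_pM; rewrite ?exprn_ge0 //.
  by apply: ler_weXn2l; rewrite // invf_ge1.
by apply: bump_poly_derivn_le; rewrite ?ger0_norm.
Qed.

Lemma sqnorm_bump_deriv_le t : (t <= alpha)%N ->
  sqnormL2rho (bump_deriv t) <= (d^-1 ^+ alpha * K) ^+ 2 * rho 0 * d.
Proof.
move=> le_ta; rewrite /sqnormL2rho (Rintegral_supported (a := 0) (b := d)); last first.
  by move=> x /(bump_deriv_out le_ta) ->; rewrite expr0n mul0r.
rewrite -[X in _ * X]subr0; apply: Rintegral_itv_le; first exact: ltW.
  move=> x; apply: cvgM; last exact: continuous_rho.
  exact/continuous_sqr_fun/continuous_bump_deriv.
move=> x _; apply: ler_pM; [exact: sqr_ge0 | exact: ltW (rho_gt0 _) | | exact: rho_le_rho0].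
rewrite -real_normK ?num_real //; apply: lerXn2r; rewrite ?nnegrE ?norm_bump_deriv_le //.
exact: le_trans (normr_ge0 _) (norm_bump_deriv_le x le_ta).
Qed.

Lemma sum_sqnorm_bump_deriv_le :
  \sum_(0 <= t < alpha.+1) sqnormL2rho (bump_deriv t) <=
  alpha.+1%:R * K ^+ 2 * rho 0 * d^-1 ^+ (2 * alpha) * d.
Proof.
rewrite big_mkord.
apply: le_trans (ler_sum _ (fun (t : 'I_alpha.+1) _ => sqnorm_bump_deriv_le (ltn_ord t))) _.
rewrite sumr_const card_ord -mulr_natl exprMn -exprM mulnC.
by rewrite le_eqVlt; apply/orP; left; apply/eqP; ring.
Qed.

End BumpFamily.

Lemma ratio_ge_powR (R : realType) (a b d I S : R) k :
  0 < d -> 0 <= a -> 0 < b -> 0 < S ->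
  a * d <= I -> S <= b * d^-1 ^+ (2 * k) * d ->
  a / Num.sqrt b * d `^ (k%:R + 2^-1) <= I / Num.sqrt S.
Proof.
move=> d_gt0 a_ge0 b_gt0 S_gt0 adI Sb.
have sqrt_d_gt0 : 0 < Num.sqrt d by rewrite sqrtr_gt0.
have sqrt_b_gt0 : 0 < Num.sqrt b by rewrite sqrtr_gt0.
have powE : d `^ (k%:R + 2^-1) = d ^+ k * Num.sqrt d.
  by rewrite powRD ?gt_eqF ?implybT // powR_mulrn ?powR12_sqrt // ltW.
have sqrtS : Num.sqrt S <= Num.sqrt b * d^-1 ^+ k * Num.sqrt d.
  have [b_ge0 d_ge0] := (ltW b_gt0, ltW d_gt0).
  have dV_ge0 : 0 <= d^-1 by rewrite invr_ge0.
  have dVk_ge0 : 0 <= d^-1 ^+ k by rewrite exprn_ge0.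
  apply: le_trans (ler_wsqrtr Sb) _.
  rewrite mulnC exprM sqrtrM ?mulr_ge0 ?exprn_ge0 //.
  by rewrite sqrtrM // sqrtr_sqr ger0_norm.
rewrite powE ler_pdivlMr ?sqrtr_gt0 //; apply: le_trans adI.
apply: le_trans (ler_wpM2l _ sqrtS) _.
  by rewrite !mulr_ge0 ?divr_ge0 ?exprn_ge0 ?sqrtr_ge0 // ltW.
rewrite le_eqVlt; apply/orP; left; apply/eqP.
have sqrt_dd : Num.sqrt d * Num.sqrt d = d by rewrite -expr2 sqr_sqrtr // ltW.
rewrite -[X in _ = a * X]sqrt_dd exprVn; field.
by rewrite !gt_eqF ?exprn_gt0.
Qed.

Lemma ewor_ge_ratio (R : realType) alpha n (w xi : 'I_n -> R) f g :
  in_H alpha f g -> f <> (fun _ => 0) ->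
  ((`|Igauss f - quad w xi f| / H_norm alpha g)%:E <= ewor alpha w xi)%E.
Proof. by move=> fH f_neq0; apply: ereal_sup_ubound; exists f, g. Qed.

Lemma ewor_lower_bound (R : realType) (alpha : nat) : exists2 C : R, 0 < C &
  forall n (xi w : 'I_n -> R) (delta : R), 0 < delta <= 1 ->
    (forall j, ~ (0 < xi j < delta)) ->
    ((C * delta `^ (alpha%:R + 2^-1))%:E <= ewor alpha w xi)%E.
Proof.
have [K K_gt0 K_bound] := derivn_bounded_on_unit_ball (bump_poly R alpha.+1) alpha.
pose a : R := (3 / 16) ^+ alpha.+1 * rho 1 / 2.
pose b : R := alpha.+1%:R * K ^+ 2 * rho 0.
have a_gt0 : 0 < a by rewrite divr_gt0 // mulr_gt0 ?rho_gt0 // exprn_gt0.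
have b_gt0 : 0 < b by rewrite mulr_gt0 ?rho_gt0 // mulr_gt0 ?exprn_gt0.
exists (a / Num.sqrt b) => [|n xi w d /andP[d_gt0 d_le1] xi_out].
  by rewrite divr_gt0 ?sqrtr_gt0.
apply: le_trans (ewor_ge_ratio w xi (bump_deriv_in_H alpha d_gt0) (bump_deriv0_neq0 d_gt0)).
have I_ge : a * d <= Igauss (bump_deriv alpha d 0).
  have -> : a * d = (3 / 16) ^+ alpha.+1 * rho 1 * (d / 2) by rewrite /a; field.
  exact: Igauss_bump_deriv0_ge.
rewrite lee_fin quad_bump_deriv0 // subr0 ger0_norm; last first.
  by apply: le_trans I_ge; rewrite mulr_ge0 // ltW.
apply: ratio_ge_powR (ltW a_gt0) b_gt0 _ I_ge _ => //.
  exact: sum_sqnorm_bump_deriv_gt0.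
exact: sum_sqnorm_bump_deriv_le.
Qed.

Theorem corollary3p3 (R : realType) (alpha : nat) :
  exists C : R, 0 < C /\
  (forall (n : nat) (xi w : 'I_n -> R) (delta : R),
     (forall i j : 'I_n, (i < j)%N -> xi i < xi j) ->
     0 < delta <= 1 ->
     (forall j : 'I_n, ~ (0 < xi j < delta)) ->
     ((C * delta `^ (alpha%:R + 2^-1))%:E <= ewor alpha w xi)%E) /\
  (forall (n : nat) (xi w : 'I_n -> R) (r : R),
     (1 <= n)%N -> 0 < r ->
     (forall i j : 'I_n, (i < j)%N -> xi i < xi j) ->
     (forall j : 'I_n, ~ (0 < xi j < n%:R `^ (- r))) ->
     ((C * n%:R `^ (- (r * alpha%:R) - r / 2))%:E <= ewor alpha w xi)%E).
Proof.
have [C C_gt0 ewor_ge] := ewor_lower_bound R alpha.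
exists C; split=> //; split=> [n xi w delta _|n xi w r n_ge1 r_gt0 _ xi_out].
  exact: ewor_ge.
have n_ge1' : 1 <= n%:R :> R by rewrite ler1n.
have delta_mem : 0 < (n%:R : R) `^ (- r) <= 1.
  rewrite powR_gt0 ?(lt_le_trans ltr01) //= -[leRHS](powRr0 n%:R) ler_powR //.
  by rewrite oppr_le0 ltW.
have -> : - (r * alpha%:R) - r / 2 = - r * (alpha%:R + 2^-1) by ring.
by rewrite powRrM; exact: ewor_ge.
Qed.
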